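(* Let $A$ be a synaptic algebra, $p,q\in P$, $r:=(p\vee q)\wedge(p\vee q^{\perp})\wedge(p^{\perp}\vee q)\wedge(p^{\perp}\vee q^{\perp})$, and let $c:=(pqp+p^{\perp}q^{\perp}p^{\perp})^{1/2}$ and $s:=(pq^{\perp}p+p^{\perp}qp^{\perp})^{1/2}$. Then: (i) $c^2=pqp+p^{\perp}q^{\perp}p^{\perp}=1-(p-q)^2=(p-q^{\perp})^2=(p+q-1)^2$; (ii) $s^2=pq^{\perp}p+p^{\perp}qp^{\perp}=(p-q)^2$; (iii) $pc^2=pqp=c^2p$, $qc^2=qpq=c^2q$, $ps^2=pq^{\perp}p=s^2p$, $qs^2=qp^{\perp}q=s^2q$, and $s^2p^{\perp}=p^{\perp}qp^{\perp}=p^{\perp}s^2$; (iv) $c=|p-q^{\perp}|$ and $s=|p-q|$; (v) $c^2+s^2=1$; (vi) $0\le c^2,s^2,c,s\le1$, $c^2\le c$ and $s^2\le s$; (vii) $C(c)=C(c^2)=C(s^2)=C(s)$; (viii) $cCp$, $cCq$, $cCr$, $sCp$, $sCq$, $sCr$ and $cCs$; (ix) $C(p)\cap C(q)\subseteq C(c)=C(s)$.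
   Context: Synaptic algebra (Foulis): $R$ is a real linear associative algebra with unit $1$, and $A\subseteq R$ is a real linear subspace with $1\in A$. For $a,b\in A$ write $aCb$ iff $ab=ba$; $C(a):=\{b\in A: aCb\}$; $CC(a):=\{b\in A: bCd \text{ for all } d\in C(a)\}$. $A$ is a synaptic algebra with enveloping algebra $R$ iff: (SA1) $A$ is a partially ordered archimedean real linear space with positive cone $A^+$, $1$ is an order unit, $\|\cdot\|$ the order-unit norm; (SA2) $a\in A\Rightarrow a^2\in A^+$; (SA3) $a,b\in A^+\Rightarrow aba\in A^+$; (SA4) if $a\in A$, $b\in A^+$, $aba=0$ then $ab=ba=0$; (SA5) if $a\in A^+$ there is $b\in A^+\cap CC(a)$ with $b^2=a$; (SA6) for $a\in A$ there is $p=p^2\in A$ with $ab=0\Leftrightarrow pb=0$ for all $b\in A$; (SA7) if $1\le a$ there is $b\in A$ with $ab=ba=1$; (SA8) if $a,b\in A$, $a_1\le a_2\le\cdots$ are pairwise commuting elements of $C(b)$ with $\|a-a_n\|\to0$, then $a\in C(b)$. $A$ is nondegenerate. $P:=\{p\in A:p=p^2\}$ with the inherited order is an orthomodular lattice with $p^{\perp}:=1-p$, meet $\wedge$, join $\vee$. For $0\le a$, $a^{1/2}$ is the unique positive square root of $a$ in $A$; $|a|:=(a^2)^{1/2}$. ($c$ and $s$ are called the cosine and sine effects of $q$ with respect to $p$.) *)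

(* real scalars are an abstract [realType] (complete archimedean
   ordered field, i.e. the reals); the enveloping algebra R is an [algType K]
   (real linear associative algebra with unit). *)
From HB Require Import structures.
From mathcomp Require Import all_boot all_order all_algebra.
From mathcomp Require Import boolp classical_sets reals.
From Stdlib Require Import ClassicalEpsilon.
Set Implicit Arguments. Unset Strict Implicit. Unset Printing Implicit Defensive.
Import Order.TTheory GRing.Theory Num.Theory.
Local Open Scope ring_scope.

Section Synaptic.
Variables (K : realType) (E : algType K).
(* A : the subspace A of R;  Apos : the positive cone A^+ *)
Variables (A Apos : E -> Prop).

Definition sle (a b : E) : Prop := Apos (b - a).

Definition onorm (a : E) : K :=
  inf [set l : K | 0 <= l /\ sle (- (l *: 1)) a /\ sle a (l *: 1)].

Definition Comm (a : E) : E -> Prop := fun b => A b /\ a * b = b * a.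
Definition CComm (a : E) : E -> Prop :=
  fun b => A b /\ forall d, Comm a d -> b * d = d * b.

Definition is_synaptic : Prop :=
  [/\ A 0, A 1, (forall a b, A a -> A b -> A (a + b)) &
      (forall (l : K) a, A a -> A (l *: a))] /\
  [/\ (forall a, Apos a -> A a),
      Apos 0,
      (forall a b, Apos a -> Apos b -> Apos (a + b)),
      (forall (l : K) a, 0 <= l -> Apos a -> Apos (l *: a)) &
      (forall a, Apos a -> Apos (- a) -> a = 0)] /\
  (forall a, A a -> exists l : K, sle a (l *: 1)) /\
  (forall a b, A a -> A b -> (forall n : nat, sle (n%:R *: a) b) -> sle a 0) /\
  (1 : E) <> 0 /\
  (forall a, A a -> Apos (a * a)) /\
  (forall a b, Apos a -> Apos b -> Apos (a * b * a)) /\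
  (forall a b, A a -> Apos b -> a * b * a = 0 -> a * b = 0 /\ b * a = 0) /\
  (forall a, Apos a -> exists b, Apos b /\ CComm a b /\ b * b = a) /\
  (forall a, A a -> exists p, A p /\ p * p = p /\
                  forall b, A b -> (a * b = 0 <-> p * b = 0)) /\
  (forall a, A a -> sle 1 a -> exists b, A b /\ a * b = 1 /\ b * a = 1) /\
  (forall (a b : E) (u : nat -> E), A a -> A b ->
                  (forall n, Comm b (u n)) ->
                  (forall n m, u n * u m = u m * u n) ->
                  (forall n, sle (u n) (u n.+1)) ->
                  (forall eps : K, 0 < eps -> exists N, forall n, (N <= n)%N ->
                       onorm (a - u n) < eps) ->
                  Comm b a).

Definition isProj (p : E) : Prop := A p /\ p * p = p.
Definition pcompl (p : E) : E := 1 - p.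

Local Definition inhE : inhabited E := inhabits 0.

Definition pmeet (p q : E) : E :=
  epsilon inhE (fun m => isProj m /\ sle m p /\ sle m q /\
     forall x, isProj x -> sle x p -> sle x q -> sle x m).
Definition pjoin (p q : E) : E :=
  epsilon inhE (fun m => isProj m /\ sle p m /\ sle q m /\
     forall x, isProj x -> sle p x -> sle q x -> sle m x).

(* a^{1/2}: the (unique) positive square root of a in A *)
Definition Asqrt (a : E) : E := epsilon inhE (fun b => Apos b /\ b * b = a).
Definition Aabs (a : E) : E := Asqrt (a ^+ 2).

End Synaptic.

From HB Require Import structures.
From mathcomp Require Import all_boot all_order all_algebra.
From mathcomp Require Import boolp classical_sets reals.
From Stdlib Require Import ClassicalEpsilon.
Set Implicit Arguments. Unset Strict Implicit. Unset Printing Implicit Defensive.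
Import Order.TTheory GRing.Theory Num.Theory.
Local Open Scope ring_scope.

(* The squares [c^2 = pqp + p'q'p'] and [s^2 = pq'p + p'qp'] are [1 - (p - q)^2] and
   [(p - q)^2]; this and the other identities in (i)-(iii) and (v) hold for any two
   idempotents of a ring, and they show that [p] and [q] commute with [c^2].
   Everything else follows from three facts about synaptic algebras: a positive square
   root is unique and lies in the double commutant, so [C(a^{1/2}) = C(a)]; an element
   commuting with two projections commutes with their join (the carrier projection of
   their sum, from (SA6)) and hence, by De Morgan, with their meet; and [0 <= b] with
   [b^2 <= 1] gives [b <= 1] and [b^2 <= b], because [1 - b = (1 + b)^-1 (1 - b^2)] is
   a product of commuting positive elements. *)

Section IdempotentIdentities.
Variable R : pzRingType.

Lemma idem_compl (x : R) : x * x = x -> (1 - x) * (1 - x) = 1 - x.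
Proof. by move=> xx; rewrite mulrBr mulr1 mulrBl mul1r xx subrr subr0. Qed.

Variables x y : R.
Hypotheses (xx : x * x = x) (yy : y * y = y).

Lemma sqrB_idem : (x - y) ^+ 2 = x + y - (x * y + y * x).
Proof. by rewrite expr2 mulrBl !mulrBr xx yy opprB opprD addrACA. Qed.

Lemma idem_mul_sqrB : x * (x - y) ^+ 2 = x - x * y * x.
Proof. by rewrite sqrB_idem mulrBr !mulrDr xx mulrA xx opprD addrA addrK mulrA. Qed.

Lemma sqrB_mul_idem : (x - y) ^+ 2 * x = x - x * y * x.
Proof.
by rewrite sqrB_idem mulrBl !mulrDl xx -[y * x * x]mulrA xx opprD addrA addrAC addrK.
Qed.

Lemma sandwich_compl : x * (1 - y) * x = x - x * y * x.
Proof. by rewrite mulrBr mulr1 mulrBl xx. Qed.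

Lemma sine_sq_idem : x * (1 - y) * x + (1 - x) * y * (1 - x) = (x - y) ^+ 2.
Proof.
rewrite sandwich_compl sqrB_idem mulrBl mul1r !mulrBr mulr1 mulrBl opprB.
by rewrite (addrACA y) (addrA (x - x * y * x)) (addrACA x) addNr addr0 opprD.
Qed.

Lemma cosine_sq_idem :
  x * y * x + (1 - x) * (1 - y) * (1 - x) = 1 - (x - y) ^+ 2.
Proof.
rewrite -sine_sq_idem; apply/(addIr (x * (1 - y) * x + (1 - x) * y * (1 - x))).
rewrite subrK addrACA -!mulrDl -!mulrDr (addrCA y) subrr addr0 subrK !mulr1 xx.
by rewrite idem_compl // addrCA subrr addr0.
Qed.

Lemma idem_mul_subsqrB : x * (1 - (x - y) ^+ 2) = x * y * x.
Proof. by rewrite mulrBr mulr1 idem_mul_sqrB subKr. Qed.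

Lemma subsqrB_mul_idem : (1 - (x - y) ^+ 2) * x = x * y * x.
Proof. by rewrite mulrBl mul1r sqrB_mul_idem subKr. Qed.

Lemma sqrB_mul_idemC : (x - y) ^+ 2 * (1 - x) = (1 - x) * y * (1 - x).
Proof.
rewrite mulrBr mulr1 sqrB_mul_idem -{1}sine_sq_idem sandwich_compl.
by rewrite addrC addKr.
Qed.

Lemma idemC_mul_sqrB : (1 - x) * (x - y) ^+ 2 = (1 - x) * y * (1 - x).
Proof.
rewrite mulrBl mul1r idem_mul_sqrB -{1}sine_sq_idem sandwich_compl.
by rewrite addrC addKr.
Qed.

End IdempotentIdentities.

Lemma sqrB_idem_compl (R : pzRingType) (x y : R) : x * x = x -> y * y = y ->
  (x - (1 - y)) ^+ 2 = 1 - (x - y) ^+ 2.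
Proof.
move=> xx yy.
by rewrite -cosine_sq_idem // -(sine_sq_idem xx (idem_compl yy)) subKr.
Qed.

Section SynapticAlgebra.
Variables (K : realType) (E : algType K) (A Apos : E -> Prop).
Hypothesis HA : is_synaptic A Apos.

Lemma A1 : A 1. Proof. by case: HA => -[]. Qed.
Lemma AD a b : A a -> A b -> A (a + b). Proof. by case: HA => -[_ _ h _] _; apply: h. Qed.
Lemma AZ (l : K) a : A a -> A (l *: a). Proof. by case: HA => -[_ _ _ h] _; apply: h. Qed.

Lemma AB a b : A a -> A b -> A (a - b).
Proof. by move=> ha hb; apply: AD => //; rewrite -scaleN1r; apply: AZ. Qed.

Lemma Apos_A a : Apos a -> A a.
Proof. by case: HA => _ [[h _ _ _ _] _]; apply: h. Qed.

Lemma Apos_add a b : Apos a -> Apos b -> Apos (a + b).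
Proof. by case: HA => _ [[_ _ h _ _] _]; apply: h. Qed.

Lemma Apos_anti a : Apos a -> Apos (- a) -> a = 0.
Proof. by case: HA => _ [[_ _ _ _ h] _]; apply: h. Qed.

Lemma SA2 a : A a -> Apos (a * a).
Proof. by case: HA => _ [_ [_ [_ [_ [h _]]]]]; apply: h. Qed.

Lemma SA3 a b : Apos a -> Apos b -> Apos (a * b * a).
Proof. by case: HA => _ [_ [_ [_ [_ [_ [h _]]]]]]; apply: h. Qed.

Lemma SA4 a b : A a -> Apos b -> a * b * a = 0 -> a * b = 0 /\ b * a = 0.
Proof. by case: HA => _ [_ [_ [_ [_ [_ [_ [h _]]]]]]]; apply: h. Qed.

Lemma SA5 a : Apos a -> exists b, [/\ Apos b, CComm A a b & b * b = a].
Proof.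
by case: HA => _ [_ [_ [_ [_ [_ [_ [_ [h _]]]]]]]] /h [b [? [? ?]]]; exists b.
Qed.

Lemma SA6 a : A a ->
  exists e, [/\ isProj A e & forall b, A b -> (a * b = 0 <-> e * b = 0)].
Proof.
by case: HA => _ [_ [_ [_ [_ [_ [_ [_ [_ [h _]]]]]]]]] /h [e [? [? ?]]]; exists e.
Qed.

Lemma SA7 a : A a -> sle Apos 1 a -> exists b, [/\ A b, a * b = 1 & b * a = 1].
Proof.
by case: HA => _ [_ [_ [_ [_ [_ [_ [_ [_ [_ [h _]]]]]]]]]] ha /(h _ ha) [b [? [? ?]]]; exists b.
Qed.

Lemma Apos1 : Apos 1. Proof. by rewrite -(mulr1 1); apply: SA2; apply: A1. Qed.

Lemma sle_anti a b : sle Apos a b -> sle Apos b a -> a = b.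
Proof. by move=> hab hba; apply/esym/subr0_eq/Apos_anti; rewrite ?opprB. Qed.

Lemma Apos_add_eq0 a b : Apos a -> Apos b -> a + b = 0 -> a = 0.
Proof.
by move=> ha hb /eqP; rewrite addr_eq0 => /eqP ab; apply: Apos_anti => //; rewrite ab opprK.
Qed.

Lemma Apos_proj e : isProj A e -> Apos e.
Proof. by case=> he ee; rewrite -ee; apply: SA2. Qed.

Lemma isProj_compl e : isProj A e -> isProj A (1 - e).
Proof. by case=> he ee; split; [apply: AB => //; apply: A1 | apply: idem_compl]. Qed.

Lemma Apos_mul_comm a b : Apos a -> Apos b -> a * b = b * a -> Apos (a * b).
Proof.
move=> ha hb ab; have [b0 [hb0 [_ cb0] <-]] := SA5 hb.
have ab0 : b0 * a = a * b0 by apply: cb0; split; [apply: Apos_A | rewrite -ab].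
by rewrite mulrA -ab0; apply: SA3.
Qed.

Lemma A_sandwich a b : A a -> A b -> A (a * b * a).
Proof.
have Ajordan u v : A u -> A v -> A (u * v + v * u).
  move=> hu hv; have -> : u * v + v * u = (u + v) * (u + v) - u * u - v * v.
    rewrite mulrDl !mulrDr (addrC (u * u)) addrACA.
    by rewrite -(addrA (u * v + v * u + (u * u + v * v))) -opprD addrK.
  by apply: AB; [apply: AB|]; apply: Apos_A; apply: SA2 => //; apply: AD.
move=> ha hb; have h2 : A ((a * b * a) *+ 2).
  have -> : (a * b * a) *+ 2 =
      (a * (a * b + b * a) + (a * b + b * a) * a) - (a * a * b + b * (a * a)).
    by rewrite mulrDr mulrDl !mulrA mulr2n (addrC (a * a * b)) addrACA addrK.
  by apply: AB; apply: (Ajordan) => //; [apply: (Ajordan) | apply: Apos_A; apply: SA2].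
have -> : a * b * a = (2%:R^-1 : K) *: ((a * b * a) *+ 2).
  by rewrite -scaler_nat scalerA mulVf ?scale1r // pnatr_eq0.
exact: AZ.
Qed.

Lemma Comm_compl a x : Comm A (1 - a) x <-> Comm A a x.
Proof.
have comm_1B u : GRing.comm u x -> GRing.comm (1 - u) x.
  by move=> ux; apply/commr_sym/commrB; [apply: commr1 | apply/commr_sym].
split=> -[hx ax]; split=> //; last exact: comm_1B.
by have := comm_1B _ ax; rewrite subKr.
Qed.

Lemma Apos_sqrt_uniq a b b' : Apos b -> b * b = a ->
  Apos b' -> CComm A a b' -> b' * b' = a -> b = b'.
Proof.
move=> hb bb hb' [_ cb'] b'b'.
have bb' : b' * b = b * b' by apply: cb'; split; [apply: Apos_A | rewrite -bb mulrA].
set d := b - b'; have hd : A d by apply: AB; apply: Apos_A.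
have db : d * b = b * d by rewrite /d mulrBl mulrBr bb'.
have db' : d * b' = b' * d by rewrite /d mulrBl mulrBr bb'.
have dbd u : Apos u -> d * u = u * d -> Apos (d * u * d).
  move=> hu du; rewrite -mulrA -du mulrA.
  by apply: Apos_mul_comm (SA2 hd) hu _; rewrite -mulrA du mulrA du -mulrA.
(* [d b d + d b' d = d (b + b') (b - b') = d (b^2 - b'^2) = 0] *)
have sum0 : d * b * d + d * b' * d = 0.
  rewrite -mulrDl -mulrDr /d mulrBl !mulrDr bb b'b' bb'.
  by rewrite (addrC (b * b')) subrr !mul0r addr0.
have e := Apos_add_eq0 (dbd _ hb db) (dbd _ hb' db') sum0.
have e' : d * b' * d = 0 by move: sum0; rewrite e add0r.
have [db0 _] := SA4 hd hb e; have [db'0 _] := SA4 hd hb' e'.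
have [d0 _] : d * 1 = 0 /\ 1 * d = 0.
  by apply: SA4 hd Apos1 _; rewrite mulr1 -{2}[d]/(b - b') mulrBr db0 db'0 subr0.
by apply/subr0_eq; rewrite -[b - b']/d -[d]mulr1.
Qed.

Lemma AsqrtP a : Apos a ->
  [/\ Apos (Asqrt Apos a), Asqrt Apos a * Asqrt Apos a = a & CComm A a (Asqrt Apos a)].
Proof.
move=> ha; have [b0 [hb0 cb0 b0b0]] := SA5 ha.
have [hs ss] : Apos (Asqrt Apos a) /\ Asqrt Apos a * Asqrt Apos a = a.
  exact: (epsilon_spec _ (fun b => Apos b /\ b * b = a) (ex_intro _ b0 (conj hb0 b0b0))).
by split=> //; rewrite (Apos_sqrt_uniq hs ss hb0 cb0 b0b0).
Qed.

Lemma Comm_Asqrt a x : Apos a -> Comm A (Asqrt Apos a) x <-> Comm A a x.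
Proof.
move=> /AsqrtP [_ ss [_ cs]]; split=> -[hx h]; split=> //; last exact: cs.
by rewrite -ss -mulrA h mulrA h mulrA.
Qed.

Lemma compl_sandwich_eq0 e x : isProj A e -> Apos x ->
  (1 - e) * x * (1 - e) = 0 -> e * x = x /\ x * e = x.
Proof.
move=> /isProj_compl [he _] hx /(SA4 he hx) [ex xe].
by split; apply/esym/subr0_eq; [move: ex; rewrite mulrBl mul1r | move: xe; rewrite mulrBr mulr1].
Qed.

Lemma sle_proj x y : isProj A x -> isProj A y ->
  sle Apos x y <-> y * x = x /\ x * y = x.
Proof.
move=> px py; split=> [hxy | [yx xy]].
  apply: compl_sandwich_eq0 => //; first exact: Apos_proj.
  apply: Apos_anti; first by apply: SA3; [apply/Apos_proj/isProj_compl | apply: Apos_proj].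
  have -> : - ((1 - y) * x * (1 - y)) = (1 - y) * (y - x) * (1 - y).
    by rewrite [(1 - y) * (y - x)]mulrBr [(1 - y) * y]mulrBl mul1r py.2 subrr sub0r mulNr.
  by apply: SA3 => //; apply/Apos_proj/isProj_compl.
rewrite /sle; have -> : y - x = (y - x) * (y - x).
  by rewrite mulrBl !mulrBr py.2 px.2 yx xy subrr subr0.
by apply: SA2; apply: AB; [exact: py.1 | exact: px.1].
Qed.

Lemma Comm_annihilator_proj a e b : isProj A e ->
  (forall d, A d -> a * d = 0 <-> e * d = 0) -> Comm A a b -> Comm A e b.
Proof.
move=> pe ann [hb ab]; split=> //.
have [hce _] := isProj_compl pe.
have e1e : e * (1 - e) = 0 by rewrite mulrBr mulr1 pe.2 subrr.
have ae : a * e = a.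
  by apply/esym/subr0_eq; rewrite -[a]mulr1 -mulrA -mulrBr mul1r; apply/ann.
(* [m] is the off-diagonal part of [b] with respect to [e]; it vanishes *)
set m := b - e * b * e - (1 - e) * b * (1 - e).
have hm : A m by apply: AB; [apply: AB => //|]; apply: A_sandwich => //; exact: pe.1.
have em : e * m = 0.
  have a1e : a * (1 - e) = 0 by rewrite mulrBr mulr1 ae subrr.
  apply/ann => //; rewrite /m !mulrBr !mulrA ae a1e !mul0r subrr subr0.
  by rewrite ab -mulrA ae subrr.
have ebe : e * b * (1 - e) = 0.
  by rewrite mulrBr mulr1; move: em; rewrite /m !mulrBr !mulrA pe.2 e1e !mul0r subrr subr0.
have mE : m = (1 - e) * b * e.
  rewrite /m !mulrBr !mulr1 !mulrBl !mul1r; move: ebe; rewrite mulrBr mulr1.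
  by move/subr0_eq => ->; rewrite -!mulrA pe.2 !mulrA subKr.
have [m0 _] : m * 1 = 0 /\ 1 * m = 0.
  by apply: SA4 hm Apos1 _; rewrite mulr1 mE !mulrA -[_ * e * (1 - e)]mulrA e1e mulr0 !mul0r.
move: m0; rewrite mulr1 mE !mulrBl mul1r => /subr0_eq be.
by move: ebe; rewrite mulrBr mulr1 -be => /subr0_eq.
Qed.

Lemma pjoin_exists x y : isProj A x -> isProj A y -> exists e,
  [/\ isProj A e, sle Apos x e, sle Apos y e,
      (forall z, isProj A z -> sle Apos x z -> sle Apos y z -> sle Apos e z) &
      (forall b, Comm A x b -> Comm A y b -> Comm A e b)].
Proof.
move=> px py; have ha : A (x + y) := AD px.1 py.1.
have [e [pe ann]] := SA6 ha; have [hce _] := isProj_compl pe.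
have a1e : (x + y) * (1 - e) = 0 by apply/ann => //; rewrite mulrBr mulr1 pe.2 subrr.
have sum0 : (1 - e) * x * (1 - e) + (1 - e) * y * (1 - e) = 0.
  by rewrite -mulrDl -mulrDr -mulrA a1e mulr0.
have hx := Apos_proj px; have hy := Apos_proj py; have he := Apos_proj pe.
have hcx : Apos ((1 - e) * x * (1 - e)) by apply: SA3 => //; apply/Apos_proj/isProj_compl.
have hcy : Apos ((1 - e) * y * (1 - e)) by apply: SA3 => //; apply/Apos_proj/isProj_compl.
have x0 := Apos_add_eq0 hcx hcy sum0.
have y0 : (1 - e) * y * (1 - e) = 0 by move: sum0; rewrite x0 add0r.
exists e; split=> //.
- exact/sle_proj/(compl_sandwich_eq0 pe hx x0).
- exact/sle_proj/(compl_sandwich_eq0 pe hy y0).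
- move=> z pz /(sle_proj px pz) [_ xz] /(sle_proj py pz) [_ yz].
  have [hcz _] := isProj_compl pz.
  have ez : e * (1 - z) = 0.
    by apply/ann => //; rewrite mulrDl !mulrBr !mulr1 xz yz !subrr addr0.
  apply/sle_proj/(compl_sandwich_eq0 pz he) => //.
  by rewrite -mulrA ez mulr0.
- move=> b [hb xb] [_ yb]; apply: Comm_annihilator_proj ann _ => //.
  by split=> //; apply/commr_sym/commrD; apply/commr_sym.
Qed.

Lemma pjoinP x y : isProj A x -> isProj A y ->
  [/\ isProj A (pjoin A Apos x y), sle Apos x (pjoin A Apos x y),
      sle Apos y (pjoin A Apos x y),
      (forall z, isProj A z -> sle Apos x z -> sle Apos y z -> sle Apos (pjoin A Apos x y) z) &
      (forall b, Comm A x b -> Comm A y b -> Comm A (pjoin A Apos x y) b)].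
Proof.
move=> px py; have [e [pe xe ye le_e ce]] := pjoin_exists px py.
pose P m := isProj A m /\ sle Apos x m /\ sle Apos y m /\
  forall z, isProj A z -> sle Apos x z -> sle Apos y z -> sle Apos m z.
have [pJ [xJ [yJ le_J]]] : P (pjoin A Apos x y).
  by apply: epsilon_spec; exists e.
by have -> : pjoin A Apos x y = e by apply: sle_anti; [apply: le_J | apply: le_e].
Qed.

Lemma sle_compl a b : sle Apos a b <-> sle Apos (1 - b) (1 - a).
Proof. by rewrite /sle (_ : 1 - a - (1 - b) = b - a) // opprB addrC subrKA. Qed.

Lemma pmeetP x y : isProj A x -> isProj A y ->
  isProj A (pmeet A Apos x y) /\
  (forall b, Comm A x b -> Comm A y b -> Comm A (pmeet A Apos x y) b).
Proof.
move=> px py; have pcx := isProj_compl px; have pcy := isProj_compl py.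
have [pJ xJ yJ le_J cJ] := pjoinP pcx pcy.
set J := pjoin A Apos (1 - x) (1 - y) in pJ xJ yJ le_J cJ.
(* De Morgan: the meet is the complement of the join of the complements *)
have le_x : sle Apos (1 - J) x by apply/sle_compl; rewrite subKr.
have le_y : sle Apos (1 - J) y by apply/sle_compl; rewrite subKr.
have ge_J z : isProj A z -> sle Apos z x -> sle Apos z y -> sle Apos z (1 - J).
  move=> pz /sle_compl zx /sle_compl zy.
  by apply/sle_compl; rewrite subKr; apply: le_J => //; apply: isProj_compl.
pose P m := isProj A m /\ sle Apos m x /\ sle Apos m y /\
  forall z, isProj A z -> sle Apos z x -> sle Apos z y -> sle Apos z m.
have [pM [Mx [My ge_M]]] : P (pmeet A Apos x y).
  by apply: epsilon_spec; exists (1 - J); split; [apply: isProj_compl|].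
have -> : pmeet A Apos x y = 1 - J.
  by apply: sle_anti; [apply: ge_J | apply: ge_M] => //; apply: isProj_compl.
split; first exact: isProj_compl.
by move=> b /Comm_compl xb /Comm_compl yb; apply/Comm_compl/cJ.
Qed.

Lemma sle_sqr_bounds b : Apos b -> Apos (1 - b ^+ 2) ->
  [/\ sle Apos 0 (b ^+ 2), sle Apos (b ^+ 2) 1, sle Apos 0 b, sle Apos b 1 &
      sle Apos (b ^+ 2) b].
Proof.
move=> hb hb2; have hAb := Apos_A hb.
have b2 : Apos (b ^+ 2) by rewrite expr2; apply: SA2.
have [g [hg g1 g2]] : exists g, [/\ A g, (1 + b) * g = 1 & g * (1 + b) = 1].
  by apply: SA7; [apply: AD A1 hAb | rewrite /sle (addrC 1) addrK].
have gb : g * b = b * g.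
  by apply: (@addrI _ g); move: g1 g2; rewrite mulrDl mulrDr mul1r mulr1 => -> ->.
have hg0 : Apos g.
  have -> : g = (g * g) * (1 + b) by rewrite -mulrA g2 mulr1.
  apply: Apos_mul_comm; [exact: SA2 | exact: Apos_add Apos1 hb |].
  by rewrite -mulrA g2 mulr1 mulrA g1 mul1r.
have b1 : Apos (1 - b).
  have -> : 1 - b = g * (1 - b ^+ 2).
    have f : (1 + b) * (1 - b) = 1 - b ^+ 2.
      by rewrite mulrDl mul1r mulrBr mulr1 expr2 subrKA.
    by rewrite -f mulrA g2 mul1r.
  apply: Apos_mul_comm => //.
  by apply/commrB; [exact: commr1 | rewrite expr2; exact: commrM].
split; rewrite /sle ?subr0 //.
have -> : b - b ^+ 2 = b * (1 - b) by rewrite mulrBr mulr1 expr2.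
by apply: Apos_mul_comm => //; apply/commrB; [exact: commr1 | exact: commr_refl].
Qed.

Section CosineSine.
Variables p q : E.
Hypotheses (Hp : isProj A p) (Hq : isProj A q).
Let pp : p * p = p := Hp.2.
Let qq : q * q = q := Hq.2.

Local Notation c := (Asqrt Apos (p * q * p + (1 - p) * (1 - q) * (1 - p))).
Local Notation s := (Asqrt Apos (p * (1 - q) * p + (1 - p) * q * (1 - p))).
Local Notation com := (pmeet A Apos (pmeet A Apos (pmeet A Apos (pjoin A Apos p q)
  (pjoin A Apos p (1 - q))) (pjoin A Apos (1 - p) q)) (pjoin A Apos (1 - p) (1 - q))).

Lemma Apos_cos_sq : Apos (p * q * p + (1 - p) * (1 - q) * (1 - p)).
Proof.
have [hpc hqc] := (Apos_proj (isProj_compl Hp), Apos_proj (isProj_compl Hq)).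
by apply: Apos_add; apply: SA3 => //; apply: Apos_proj.
Qed.

Lemma Apos_sin_sq : Apos (p * (1 - q) * p + (1 - p) * q * (1 - p)).
Proof.
have [hpc hqc] := (Apos_proj (isProj_compl Hp), Apos_proj (isProj_compl Hq)).
by apply: Apos_add; apply: SA3 => //; apply: Apos_proj.
Qed.

Lemma Apos_cos : Apos c. Proof. by have [] := AsqrtP Apos_cos_sq. Qed.
Lemma Apos_sin : Apos s. Proof. by have [] := AsqrtP Apos_sin_sq. Qed.

Lemma cos_sq : c ^+ 2 = p * q * p + (1 - p) * (1 - q) * (1 - p).
Proof. by have [_ cc _] := AsqrtP Apos_cos_sq; rewrite expr2. Qed.

Lemma sin_sq : s ^+ 2 = p * (1 - q) * p + (1 - p) * q * (1 - p).
Proof. by have [_ ss _] := AsqrtP Apos_sin_sq; rewrite expr2. Qed.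

Lemma cos_sqE : c ^+ 2 = 1 - (p - q) ^+ 2.
Proof. by rewrite cos_sq cosine_sq_idem. Qed.

Lemma sin_sqE : s ^+ 2 = (p - q) ^+ 2.
Proof. by rewrite sin_sq sine_sq_idem. Qed.

Lemma cos_sq_add_sin_sq : c ^+ 2 + s ^+ 2 = 1.
Proof. by rewrite cos_sqE sin_sqE subrK. Qed.

Lemma sandwich_cos_sin_sq :
  [/\ p * c ^+ 2 = p * q * p /\ p * q * p = c ^+ 2 * p,
      q * c ^+ 2 = q * p * q /\ q * p * q = c ^+ 2 * q,
      p * s ^+ 2 = p * (1 - q) * p /\ p * (1 - q) * p = s ^+ 2 * p,
      q * s ^+ 2 = q * (1 - p) * q /\ q * (1 - p) * q = s ^+ 2 * q &
      s ^+ 2 * (1 - p) = (1 - p) * q * (1 - p) /\ (1 - p) * q * (1 - p) = (1 - p) * s ^+ 2].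
Proof.
have qpE : (p - q) ^+ 2 = (q - p) ^+ 2 by rewrite -opprB sqrrN.
rewrite cos_sqE sin_sqE !sandwich_compl //.
split; split; rewrite ?idem_mul_subsqrB ?subsqrB_mul_idem ?idem_mul_sqrB ?sqrB_mul_idem
  ?sqrB_mul_idemC ?idemC_mul_sqrB //.
all: by rewrite qpE ?idem_mul_subsqrB ?subsqrB_mul_idem ?idem_mul_sqrB ?sqrB_mul_idem.
Qed.

Lemma cos_sq_sin : c ^+ 2 = 1 - s ^+ 2.
Proof. by apply/esym/eqP; rewrite subr_eq cos_sq_add_sin_sq. Qed.

Lemma cos_sin_bounds :
  [/\ sle Apos 0 (c ^+ 2) /\ sle Apos (c ^+ 2) 1,
      sle Apos 0 (s ^+ 2) /\ sle Apos (s ^+ 2) 1,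
      sle Apos 0 c /\ sle Apos c 1,
      sle Apos 0 s /\ sle Apos s 1 &
      sle Apos (c ^+ 2) c /\ sle Apos (s ^+ 2) s].
Proof.
have [hc hs] := (Apos_A Apos_cos, Apos_A Apos_sin).
have c2_1 : Apos (1 - c ^+ 2) by rewrite cos_sq_sin subKr expr2; apply: SA2.
have s2_1 : Apos (1 - s ^+ 2) by rewrite -cos_sq_sin expr2; apply: SA2.
have [? ? ? ? ?] := sle_sqr_bounds Apos_cos c2_1.
by have [? ? ? ? ?] := sle_sqr_bounds Apos_sin s2_1.
Qed.

Lemma Comm_cos_sq x : Comm A c x <-> Comm A (c ^+ 2) x.
Proof. by rewrite cos_sq; apply: Comm_Asqrt Apos_cos_sq. Qed.

Lemma Comm_sin_sq x : Comm A (s ^+ 2) x <-> Comm A s x.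
Proof. by rewrite sin_sq; symmetry; apply: Comm_Asqrt Apos_sin_sq. Qed.

Lemma Comm_cos_sq_sin_sq x : Comm A (c ^+ 2) x <-> Comm A (s ^+ 2) x.
Proof. by rewrite cos_sq_sin; apply: Comm_compl. Qed.

Lemma Comm_cos_sin x : Comm A c x <-> Comm A s x.
Proof. by rewrite Comm_cos_sq Comm_cos_sq_sin_sq Comm_sin_sq. Qed.

Lemma Comm_cos_of x : Comm A p x -> Comm A q x -> Comm A c x.
Proof.
move=> [hx /commr_sym xp] [_ /commr_sym xq]; apply/Comm_cos_sq; split=> //.
have [xpc xqc] : GRing.comm x (1 - p) /\ GRing.comm x (1 - q).
  by split; apply: commrB => //; exact: commr1.
by rewrite cos_sq; apply/commr_sym/commrD; apply: commrM => //; apply: commrM.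
Qed.

Lemma Comm_cos_proj : Comm A c p /\ Comm A c q.
Proof.
have [[pc2 c2p] [qc2 c2q] _ _ _] := sandwich_cos_sin_sq.
split; apply/Comm_cos_sq; split; [exact: Hp.1 | | exact: Hq.1 |].
  by rewrite -c2p pc2.
by rewrite -c2q qc2.
Qed.

Lemma Comm_com b : A b -> Comm A b p -> Comm A b q -> Comm A b com.
Proof.
move=> hb [_ bp] [_ bq]; have [pb qb] : Comm A p b /\ Comm A q b by [].
have [pcb qcb] : Comm A (1 - p) b /\ Comm A (1 - q) b by rewrite !Comm_compl.
have [pc qc] := (isProj_compl Hp, isProj_compl Hq).
have [J1 _ _ _ cJ1] := pjoinP Hp Hq; have [J2 _ _ _ cJ2] := pjoinP Hp qc.
have [J3 _ _ _ cJ3] := pjoinP pc Hq; have [J4 _ _ _ cJ4] := pjoinP pc qc.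
have [M1 cM1] := pmeetP J1 J2; have [M2 cM2] := pmeetP M1 J3.
have [M3 cM3] := pmeetP M2 J4.
suff [_ comb] : Comm A com b by split; [exact: M3.1 | rewrite comb].
by apply: cM3; [apply: cM2; [apply: cM1; [apply: cJ1 | apply: cJ2] | apply: cJ3] | apply: cJ4].
Qed.

End CosineSine.
End SynapticAlgebra.

Theorem theorem4p3 (K : realType) (E : algType K) (A Apos : E -> Prop)
  (HA : is_synaptic A Apos) (p q : E) (Hp : isProj A p) (Hq : isProj A q) :
  let pc := pcompl p in
  let qc := pcompl q in
  let r := pmeet A Apos (pmeet A Apos (pmeet A Apos (pjoin A Apos p q) (pjoin A Apos p qc))
                           (pjoin A Apos pc q)) (pjoin A Apos pc qc) in
  let c := Asqrt Apos (p * q * p + pc * qc * pc) in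
  let s := Asqrt Apos (p * qc * p + pc * q * pc) in
  (* (i) *)
  [/\ c ^+ 2 = p * q * p + pc * qc * pc,
      p * q * p + pc * qc * pc = 1 - (p - q) ^+ 2,
      1 - (p - q) ^+ 2 = (p - qc) ^+ 2 &
      (p - qc) ^+ 2 = (p + q - 1) ^+ 2] /\
  (* (ii) *)
  (s ^+ 2 = p * qc * p + pc * q * pc /\ p * qc * p + pc * q * pc = (p - q) ^+ 2) /\
  (* (iii) *)
  [/\ p * c ^+ 2 = p * q * p /\ p * q * p = c ^+ 2 * p,
      q * c ^+ 2 = q * p * q /\ q * p * q = c ^+ 2 * q,
      p * s ^+ 2 = p * qc * p /\ p * qc * p = s ^+ 2 * p,
      q * s ^+ 2 = q * pc * q /\ q * pc * q = s ^+ 2 * q &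
      s ^+ 2 * pc = pc * q * pc /\ pc * q * pc = pc * s ^+ 2] /\
  (* (iv) *)
  (c = Aabs Apos (p - qc) /\ s = Aabs Apos (p - q)) /\
  (* (v) *)
  c ^+ 2 + s ^+ 2 = 1 /\
  (* (vi) *)
  [/\ sle Apos 0 (c ^+ 2) /\ sle Apos (c ^+ 2) 1,
      sle Apos 0 (s ^+ 2) /\ sle Apos (s ^+ 2) 1,
      sle Apos 0 c /\ sle Apos c 1,
      sle Apos 0 s /\ sle Apos s 1 &
      sle Apos (c ^+ 2) c /\ sle Apos (s ^+ 2) s] /\
  (* (vii) *)
  (forall x, (Comm A c x <-> Comm A (c ^+ 2) x) /\
             (Comm A (c ^+ 2) x <-> Comm A (s ^+ 2) x) /\
             (Comm A (s ^+ 2) x <-> Comm A s x)) /\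
  (* (viii) *)
  ([/\ Comm A c p, Comm A c q & Comm A c r] /\
   [/\ Comm A s p, Comm A s q & Comm A s r] /\ Comm A c s) /\
  (* (ix) *)
  ((forall x, Comm A p x -> Comm A q x -> Comm A c x) /\
   (forall x, Comm A c x <-> Comm A s x)).
Proof.
move=> pc qc r c s.
have [pp qq] := (Hp.2, Hq.2).
have [hc hs] := (Apos_A HA (Apos_cos HA Hp Hq), Apos_A HA (Apos_sin HA Hp Hq)).
have [c2 s2] := (cos_sq HA Hp Hq, sin_sq HA Hp Hq).
have c2s := cos_sq_sin HA Hp Hq.
have [cp cq] := Comm_cos_proj HA Hp Hq.
have [sp sq] : Comm A s p /\ Comm A s q by rewrite -!(Comm_cos_sin HA Hp Hq).
have pqE : p - qc = p + q - 1 by rewrite /qc /pcompl opprB addrA.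
split; first by split; rewrite ?c2 ?cosine_sq_idem -?pqE ?sqrB_idem_compl.
split; first by rewrite s2 sine_sq_idem.
split; first exact: (sandwich_cos_sin_sq HA Hp Hq).
split; first by rewrite /Aabs sqrB_idem_compl // -cosine_sq_idem // -sine_sq_idem.
split; first exact: (cos_sq_add_sin_sq HA Hp Hq).
split; first exact: (cos_sin_bounds HA Hp Hq).
split.
  by move=> x; rewrite (Comm_cos_sq HA Hp Hq) (Comm_cos_sq_sin_sq HA Hp Hq) (Comm_sin_sq HA Hp Hq).
split.
  split; first by split=> //; apply: Comm_com.
  split; first by split=> //; apply: Comm_com.
  apply/(Comm_cos_sq HA Hp Hq); split=> //; rewrite c2s.
  by apply/commr_sym/commrB; [exact: commr1 | exact/commrX/commr_refl].
by split=> [x|]; [apply: Comm_cos_of | apply: Comm_cos_sin].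
Qed.
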